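(* Assume the setting in the context (in particular Assumption (A)). Let $\rho>0$, $z_0\in V_f(\rho)$ and $\epsilon>0$, and run Algorithm $\mathcal{A}_*$ from $z_0$ with accuracy $\epsilon$. Then: (i) the number of calls to $\mathcal{A}_d$ is finite, i.e. $j_{out}$ is finite; (ii) the number of iterations of $\mathcal{A}$ performed at each call of $\mathcal{A}_d$ satisfies $m_{j+1}\leq\lceil4\bar n_\rho\rceil$ for all $j\in\{0,\dots,j_{out}\}$; (iii) the total number $N_{\mathcal{A}}=\sum_{j=0}^{j_{out}}m_{j+1}$ of iterations of $\mathcal{A}$ performed by Algorithm $\mathcal{A}_*$ satisfies $$N_{\mathcal{A}}\leq\frac{e\lceil4\bar n_\rho\rceil}{2}\left\lceil5+\frac{1}{\ln15}\ln\left(1+\frac{f(z_0)-f^*}{\epsilon}\right)\right\rceil.$$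
   Context: Let $f:\mathbb{R}^n\to(-\infty,\infty]$ be a proper closed convex function such that the problem $f^*=\min_{x\in\mathbb{R}^n}f(x)$ is solvable. Let $\Omega_f=\{x: f(x)=f^*\}$, fix a norm $\|\cdot\|$ on $\mathbb{R}^n$ with dual norm $\|y\|_*=\sup\{y^Tz:\|z\|\leq 1\}$, and for $x\in\mathbb{R}^n$ let $\bar x=\arg\min_{z\in\Omega_f}\|x-z\|$. For $\rho\geq0$ let $V_f(\rho)=\{x: f(x)-f^*\leq\rho\}$. Let $\mathcal{A}$ be an iterative algorithm: for $x_0\in\mathrm{dom} f$ and integer $k\geq1$, $\mathcal{A}(x_0,k)$ denotes its $k$-th iterate started from $x_0$ (and $\mathcal{A}(x_0,0)=x_0$). Assumption (A): (i) for every $\rho>0$ there is $\mu_\rho>0$ with $f(x_0)-f^*\geq\frac{\mu_\rho}{2}\|x_0-\bar x_0\|^2$ for all $x_0\in V_f(\rho)$; (ii) there exist $a_f>0$, $L_f>0$ and $g:\mathbb{R}^n\to\mathbb{R}^n$ with $g(x)=0\iff x\in\Omega_f$ such that for every $x_0\in\mathrm{dom} f$: $f(\mathcal{A}(x_0,1))\leq f(x_0)-\frac{1}{2L_f}\|g(x_0)\|_*^2$ and $f(\mathcal{A}(x_0,k))-f^*\leq\frac{a_f}{(k+1)^2}\|x_0-\bar x_0\|^2$ for all $k\geq1$; (iii) $\bar n_\rho:=\max\{\frac12,\sqrt{2a_f/\mu_\rho}\}$. Procedure $\mathcal{A}_d(r,n)$ (input $r\in\mathrm{dom} f$, $n\in\mathbb{R}$):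 set $x_0=r$, $k=0$. Repeat: $k\gets k+1$; set $x_k=\mathcal{A}(x_0,k)$ if $f(\mathcal{A}(x_0,k))\leq f(x_{k-1})$, and $x_k=x_{k-1}$ otherwise; $\ell=\lfloor k/2\rfloor$; until $k\geq n$ and $f(x_\ell)-f(x_k)\leq\frac13(f(x_0)-f(x_\ell))$. Output $z=x_k$, $m=k$ (so $m$ iterations of $\mathcal{A}$ are performed). Algorithm $\mathcal{A}_*(z_0)$ (input $z_0\in\mathrm{dom} f$, $\epsilon>0$): set $m_0=1$, $m_{-1}=1$, $j=-1$. Repeat: $j\gets j+1$; $s_j=\sqrt{\frac{f(z_{j-1})-f(z_j)}{f(z_{j-2})-f(z_j)}}$ if $j\geq2$ and $s_j=0$ otherwise; $n_j=\max\{m_j,4s_jm_{j-1}\}$; $[z_{j+1},m_{j+1}]=\mathcal{A}_d(z_j,n_j)$; until $f(z_j)-f(z_{j+1})\leq\epsilon$. Output $z_{out}=z_{j+1}$, $j_{out}=j$. Here $e$ is Euler's number. *)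

From HB Require Import structures.
From mathcomp Require Import all_boot all_order all_algebra.
From mathcomp Require Import all_classical all_reals all_analysis.
Set Implicit Arguments. Unset Strict Implicit. Unset Printing Implicit Defensive.
Import Order.TTheory GRing.Theory Num.Theory.
Import numFieldNormedType.Exports.
Local Open Scope classical_set_scope.
Local Open Scope ring_scope.

Section Defs.
Variables (R : realType) (n : nat).
Notation vec := 'rV[R]_n.

Definition is_norm (N : vec -> R) : Prop :=
  [/\ forall x, 0 <= N x, forall x, N x = 0 -> x = 0,
      forall (a : R) x, N (a *: x) = `|a| * N x &
      forall x y, N (x + y) <= N x + N y].

Definition dotv (y z : vec) : R := \sum_(i < n) y ord0 i * z ord0 i.

Definition dual_norm (N : vec -> R) (y : vec) : R :=
  sup [set dotv y z | z in [set z | N z <= 1]].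

Definition dom (f : vec -> \bar R) : set vec := [set x | (f x < +oo)%E].

Definition proper_fun (f : vec -> \bar R) : Prop :=
  (forall x, f x != -oo%E) /\ (exists x, f x \is a fin_num).

Definition epigraph (f : vec -> \bar R) : set (vec * R) :=
  [set p | (f p.1 <= p.2%:E)%E].

(* closed = lower semicontinuous = closed epigraph *)
Definition closed_fun (f : vec -> \bar R) : Prop := closed (epigraph f).

Definition convex_fun (f : vec -> \bar R) : Prop :=
  forall x y (t : R), 0 < t < 1 ->
    (f (t *: x + (1 - t) *: y)%R <= t%:E * f x + (1 - t)%R%:E * f y)%E.

Definition fr (f : vec -> \bar R) (x : vec) : R := fine (f x).

Fixpoint Ad_x (f : vec -> \bar R) (A : vec -> nat -> vec) (r : vec) (k : nat)
  : vec :=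
  match k with
  | 0 => r
  | k'.+1 => if (f (A r k'.+1) <= f (Ad_x f A r k'))%E then A r k'.+1
             else Ad_x f A r k'
  end.

Definition Ad_stop (f : vec -> \bar R) (A : vec -> nat -> vec) (r : vec)
  (nn : R) (k : nat) : Prop :=
  nn <= k%:R /\
  (f (Ad_x f A r k./2) - f (Ad_x f A r k)
     <= (3^-1)%:E * (f (Ad_x f A r 0) - f (Ad_x f A r k./2)))%E.

Definition Ad_run (f : vec -> \bar R) (A : vec -> nat -> vec) (r : vec)
  (nn : R) (z : vec) (m : nat) : Prop :=
  [/\ (1 <= m)%N, Ad_stop f A r nn m,
      (forall k, (1 <= k < m)%N -> ~ Ad_stop f A r nn k) &
      z = Ad_x f A r m].

Definition s_coef (f : vec -> \bar R) (zs : nat -> vec) (j : nat) : R :=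
  if (2 <= j)%N then
    Num.sqrt ((fr f (zs j.-1) - fr f (zs j)) / (fr f (zs j.-2) - fr f (zs j)))
  else 0.

(* m_{j-1} with the convention m_{-1} = 1 *)
Definition m_prev (ms : nat -> nat) (j : nat) : nat :=
  if j is j'.+1 then ms j' else 1%N.

Definition n_coef (f : vec -> \bar R) (zs : nat -> vec) (ms : nat -> nat)
  (j : nat) : R :=
  Num.max (ms j)%:R (4 * s_coef f zs j * (m_prev ms j)%:R).

(* A run of A_*(z0) with accuracy eps that terminates with j_out = jout:
   zs j = z_j and ms j = m_j for 0 <= j <= jout+1. *)
Definition Astar_run (f : vec -> \bar R) (A : vec -> nat -> vec) (eps : R)
  (z0 : vec) (jout : nat) (zs : nat -> vec) (ms : nat -> nat) : Prop :=
  [/\ zs 0%N = z0, ms 0%N = 1%N,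
      (forall j, (j <= jout)%N ->
         Ad_run f A (zs j) (n_coef f zs ms j) (zs j.+1) (ms j.+1)),
      (forall j, (j < jout)%N -> ~ (f (zs j) - f (zs j.+1) <= eps%:E)%E) &
      (f (zs jout) - f (zs jout.+1) <= eps%:E)%E].

End Defs.

From HB Require Import structures.
From mathcomp Require Import all_boot all_order all_algebra.
From mathcomp Require Import all_classical all_reals all_analysis.
From mathcomp Require Import lra zify.
Set Implicit Arguments. Unset Strict Implicit. Unset Printing Implicit Defensive.
Import Order.TTheory GRing.Theory Num.Theory.
Import numFieldNormedType.Exports.
Local Open Scope classical_set_scope.
Local Open Scope ring_scope.

(* On the sublevel set of z0, Assumption (A) gives the restart rate
   (k+1)^2 (f(A(x0,k)) - f* ) <= nbar^2 (f(x0) - f* ).  Hence A_d stops as soon as its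
   counter reaches max(n, 4 nbar), and since 4 s_j m_{j-1} <= 4 nbar, no m_j exceeds
   ceil(4 nbar).  For the total count, the potential (f(z_i) - f(z_{i+1})) / (m_{i+1} m_{i+2})^4
   drops by a factor 15 from i to i+1 unless m_{i+3} >= sqrt 15 m_{i+1}.  As the decrease
   f(z_i) - f(z_{i+1}) stays between eps and f(z0) - f* until termination, the restart
   length grows by sqrt 15 > 77/20 within every T = ceil(5 + log_15(1 + (f(z0) - f* )/eps))
   calls; the m_j are then dominated by geometric blocks and sum to at most
   77/57 T ceil(4 nbar) <= e/2 T ceil(4 nbar). *)

Lemma sum_block_growth (m : nat -> nat) (b c T J : nat) : (0 < T)%N ->
  {homo m : i k / (i <= k)%N} ->
  (forall i, (0 < i)%N -> (i + T <= J.+1)%N -> ((b + c) * m i <= b * m (i + T))%N) ->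
  (c * \sum_(1 <= i < J.+2) m i <= (b + c) * T * m J.+1)%N.
Proof.
move=> T0 mono grow.
suff sum_le k : (k <= J.+1)%N -> (c * \sum_(1 <= i < k.+1) m i <= (b + c) * T * m k)%N.
  exact: sum_le.
elim/ltn_ind: k => k IH kJ.
have tail_le l : (\sum_(l <= i < k.+1) m i <= (k.+1 - l) * m k)%N.
  rewrite -sum_nat_const_nat big_nat_cond [leqRHS]big_nat_cond.
  by apply: leq_sum => i /andP[/andP[_ ik] _]; apply: mono.
have [kT|Tk] := leqP k T.
  apply: leq_trans (leq_mul (leq_mul (leq_addl b c) kT) (leqnn (m k))).
  by have := tail_le 1%N; rewrite subn1 -mulnA leq_mul2l => ->; rewrite orbT.
rewrite (@big_cat_nat _ _ _ (k - T).+1) //=; last by lia.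
have := IH (k - T)%N ltac:(lia) ltac:(lia).
have := tail_le (k - T).+1.
have := grow (k - T)%N ltac:(lia) ltac:(lia); rewrite subnK; last by lia.
have -> : (k.+1 - (k - T).+1 = T)%N by lia.
nia.
Qed.

Lemma expR1_ge (R : realType) : (65 / 24 : R) <= expR 1.
Proof.
have series_le := @nondecreasing_cvgn_le R (series (exp_coeff 1)).
have nd : nondecreasing_seq (series (exp_coeff (1 : R))).
  apply: nondecreasing_series => k _ _.
  by rewrite /exp_coeff /= expr1n mul1r invr_ge0 ler0n.
apply: le_trans (series_le nd (is_cvg_series_exp_coeff 1) 5%N).
rewrite /series /= /exp_coeff /= !big_nat_recr //= big_nil !expr1n !mul1r.
rewrite /factorial /=; lra.
Qed.

Lemma le_expn_of_ln_div (R : realType) (b x : R) (k : nat) :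
  1 < b -> 0 < x -> ln x / ln b <= k%:R -> x <= b ^+ k.
Proof.
move=> b1 x0 hk.
have bpos : b \in Num.pos by rewrite posrE; lra.
have xpos : x \in Num.pos by rewrite posrE.
rewrite -(lnK bpos) -expRM_natl -[leLHS](lnK xpos) ler_expR.
by rewrite -ler_pdivrMr // ln_gt0.
Qed.

Lemma shifted_ratio_le (R : realFieldType) (a b c m k : R) :
  0 <= c <= a -> a <= b -> 0 <= m -> 0 <= k -> m * a <= k * b ->
  m * ((a - c) / (b - c)) <= k.
Proof.
move=> /andP[c0 ca] ab m0 k0 h.
have [->|bc] := eqVneq (b - c) 0; first by rewrite invr0 !mulr0.
have bcp : 0 < b - c by rewrite lt_neqAle eq_sym bc /=; lra.
rewrite mulrA ler_pdivrMr //.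
have [km|mk] := leP k m; nra.
Qed.

Lemma quartic_decrease_step (R : rcfType) (d0 d1 p M : R) :
  0 < d0 -> 0 <= d1 -> 0 < p -> p <= M -> M ^+ 2 <= 15 * p ^+ 2 ->
  4 * Num.sqrt (d1 / (d0 + d1)) * p <= M -> 15 * p ^+ 4 * d1 <= M ^+ 4 * d0.
Proof.
move=> d0p d1p p0 pM M15 restart.
set Q := d1 / (d0 + d1) in restart.
have Q0 : 0 <= Q by rewrite divr_ge0 //; lra.
have eQ : Q * (d0 + d1) = d1 by rewrite /Q divfK //; lra.
have restart2 : 16 * Q * p ^+ 2 <= M ^+ 2.
  have : (4 * Num.sqrt Q * p) ^+ 2 <= M ^+ 2.
    by rewrite ler_pXn2r ?nnegrE //; have := sqrtr_ge0 Q; nra.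
  by rewrite !exprMn sqr_sqrtr //; nra.
have key : 16 * p ^+ 2 * d1 <= M ^+ 2 * (d0 + d1) by rewrite -eQ; nra.
(* (M^2 - p^2) (M^2 - 15 p^2) <= 0 turns key into the claim after multiplying by M^2. *)
have sign : (M ^+ 2 - p ^+ 2) * (M ^+ 2 - 15 * p ^+ 2) * d1 <= 0.
  by apply: mulr_le0_ge0 => //; apply: mulr_ge0_le0; nra.
have e4 x : x ^+ 4 = x ^+ 2 * x ^+ 2 :> R by rewrite -exprD.
rewrite !e4; nra.
Qed.

Lemma restart_rate_of_growth (R : realFieldType) (mu af nb d g0 g1 k : R) :
  0 < mu -> 0 <= af -> 0 < k -> 2 * af / mu <= nb ^+ 2 ->
  mu / 2 * d ^+ 2 <= g0 -> g1 <= af / k ^+ 2 * d ^+ 2 -> k ^+ 2 * g1 <= nb ^+ 2 * g0.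
Proof.
move=> mu0 af0 k0 nb_sq growth decay.
have decay' : k ^+ 2 * g1 <= af * d ^+ 2.
  by rewrite mulrC -ler_pdivlMr ?exprn_gt0 // mulrAC.
have nb_mu : 2 * af <= nb ^+ 2 * mu by rewrite -ler_pdivrMr.
have d2 := sqr_ge0 d.
have g0p : 0 <= g0 by apply: le_trans growth; rewrite mulr_ge0 ?divr_ge0 //; lra.
apply: le_trans decay' _; rewrite -(ler_pM2l mu0).
have h1 : mu * (af * d ^+ 2) <= af * (2 * g0).
  by rewrite mulrCA ler_wpM2l //; lra.
apply: le_trans h1 _.
by have := ler_wpM2r g0p nb_mu; lra.
Qed.

Lemma sublevel_restart_rate (R : realType) (T : Type) (f : T -> \bar R)
    (A : T -> nat -> T) (d : T -> R) (fstar mu af rho nb : R) (z0 : T) :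
  (forall y, (fstar%:E <= f y)%E) -> (f z0 - fstar%:E <= rho%:E)%E ->
  0 < mu -> 0 <= af -> 2 * af / mu <= nb ^+ 2 ->
  (forall x, (f x - fstar%:E <= rho%:E)%E ->
     ((mu / 2 * d x ^+ 2)%:E <= f x - fstar%:E)%E) ->
  (forall x k, (f x < +oo)%E -> (1 <= k)%N ->
     (f (A x k) - fstar%:E <= (af / (k%:R + 1) ^+ 2 * d x ^+ 2)%:E)%E) ->
  forall x k, (f x <= f z0)%E -> (1 <= k)%N ->
    f (A x k) \is a fin_num /\
    (k%:R + 1) ^+ 2 * (fine (f (A x k)) - fstar) <= nb ^+ 2 * (fine (f x) - fstar).
Proof.
move=> fstar_min z0rho mu0 af0 nb_sq growth decay x k xz0 k1.
have finE y r : (f y - fstar%:E <= r%:E)%E -> f y = (fine (f y))%:E.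
  by move=> h; rewrite fineK //; move: h (fstar_min y); case: (f y).
have xrho : (f x - fstar%:E <= rho%:E)%E := le_trans (leeD2r _ xz0) z0rho.
have xE := finE x rho xrho.
have decay_x := decay x k ltac:(by rewrite xE ltey) k1.
have AE := finE _ _ decay_x.
split; first by rewrite AE.
move: (growth x xrho) decay_x; rewrite xE AE -!EFinB !lee_fin.
exact: restart_rate_of_growth.
Qed.

Section AdaptiveRestart.
Variables (R : realType) (n : nat).
Local Notation vec := 'rV[R]_n.
Variables (f : vec -> \bar R) (A : vec -> nat -> vec).
Local Notation X := (Ad_x f A).
Local Notation F := (fr f).

Lemma Ad_x_le_A r k : (f (X r k.+1) <= f (A r k.+1))%E.
Proof. by rewrite /=; case: ifP => // /negbT; rewrite -ltNge => /ltW. Qed.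

Lemma Ad_x_antimono r i k : (i <= k)%N -> (f (X r k) <= f (X r i))%E.
Proof.
elim: k => [|k IH]; first by rewrite leqn0 => /eqP ->.
rewrite leq_eqVlt => /orP[/eqP -> // | ]; rewrite ltnS => /IH.
by apply: le_trans; rewrite /=; case: ifP.
Qed.

Variables (fstar nb : R) (z0 : vec).
Hypothesis fstar_min : forall y, (fstar%:E <= f y)%E.
Hypothesis z0_fin : f z0 \is a fin_num.
Hypothesis rate : forall x0 k, (f x0 <= f z0)%E -> (1 <= k)%N ->
  f (A x0 k) \is a fin_num /\
  (k%:R + 1) ^+ 2 * (F (A x0 k) - fstar) <= nb ^+ 2 * (F x0 - fstar).
Hypothesis nb_ge_half : 2^-1 <= nb.

Lemma nb_gt0 : 0 < nb.
Proof. by apply: lt_le_trans nb_ge_half; rewrite invr_gt0. Qed.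

Lemma sublevel_finE x : (f x <= f z0)%E -> f x = (F x)%:E.
Proof.
move=> xz0; rewrite /fr fineK // fin_numElt (lt_le_trans _ (fstar_min x)) ?ltNyr //.
by rewrite (le_lt_trans xz0) // ltey_eq z0_fin.
Qed.

Lemma fstar_le_sublevel x : (f x <= f z0)%E -> fstar <= F x.
Proof. by move=> xz0; have := fstar_min x; rewrite (sublevel_finE xz0) lee_fin. Qed.

Lemma Ad_x_sublevel r k : (f r <= f z0)%E -> (f (X r k) <= f z0)%E.
Proof. exact: le_trans (Ad_x_antimono r (leq0n k)). Qed.

Lemma Ad_x_rate r k : (f r <= f z0)%E -> (1 <= k)%N ->
  (k%:R + 1) ^+ 2 * (F (X r k) - fstar) <= nb ^+ 2 * (F r - fstar).
Proof.
move=> rz0; case: k => [//|k] _.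
have [Afin decay] := rate rz0 (ltn0Sn k).
have XA := Ad_x_le_A r k.
rewrite (sublevel_finE (Ad_x_sublevel k.+1 rz0)) -(fineK Afin) lee_fin in XA.
by apply: le_trans decay; apply: ler_wpM2l; [exact: sqr_ge0 | rewrite lerD2r].
Qed.

Lemma Ad_x_quarter r l : (f r <= f z0)%E -> (1 <= l)%N -> 2 * nb <= l%:R + 1 ->
  4 * (F (X r l) - fstar) <= F r - fstar.
Proof.
move=> rz0 l1 nb_l.
have decay := Ad_x_rate rz0 l1.
have gap0 : 0 <= F (X r l) - fstar.
  by rewrite subr_ge0 fstar_le_sublevel // Ad_x_sublevel.
have nb0 := nb_gt0.
have l_nb : 4 * nb ^+ 2 <= (l%:R + 1) ^+ 2 by nra.
rewrite -(ler_pM2l (exprn_gt0 2 nb0)) mulrCA.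
apply: le_trans decay; rewrite mulrA; apply: ler_wpM2r => //; lra.
Qed.

Lemma Ad_stop_large r nn k : (f r <= f z0)%E -> 4 * nb <= k%:R -> nn <= k%:R ->
  Ad_stop f A r nn k.
Proof.
move=> rz0 k_nb k_nn; split => //.
have nb_half := nb_ge_half.
have k2 : (2 <= k)%N by rewrite -(ler_nat R); apply: le_trans k_nb; lra.
set l := k./2.
have l1 : (1 <= l)%N by rewrite /l; case: k {l} k2 {k_nb k_nn} => [|[|k]].
have kl : k%:R <= 2 * l%:R + 1 :> R.
  have : (k <= l.*2 + 1)%N.
    by rewrite -{1}(odd_double_half k) addnC leq_add2l; case: odd.
  by rewrite -(ler_nat R) natrD -muln2 natrM mulrC.
have quarter := Ad_x_quarter rz0 l1 ltac:(lra).
have := fstar_le_sublevel (Ad_x_sublevel k rz0).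
rewrite /= (sublevel_finE (Ad_x_sublevel l rz0)) (sublevel_finE (Ad_x_sublevel k rz0)).
rewrite (sublevel_finE rz0) -!EFinB -EFinM lee_fin; lra.
Qed.

Definition Ad_stopb r nn k : bool := `[< (1 <= k)%N /\ Ad_stop f A r nn k >].

(* The default 1 is a junk value: from the sublevel set of z0, A_d always stops. *)
Definition Ad_m r nn : nat :=
  if pselect (exists k, Ad_stopb r nn k) is left stops then ex_minn stops else 1%N.

Lemma Ad_m_spec r nn : (f r <= f z0)%E ->
  Ad_run f A r nn (X r (Ad_m r nn)) (Ad_m r nn) /\
  forall k, (1 <= k)%N -> Ad_stop f A r nn k -> (Ad_m r nn <= k)%N.
Proof.
move=> rz0; rewrite /Ad_m; case: pselect => [stops|]; last first.
  case; set a := Num.truncn (4 * nb); set b := Num.truncn nn.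
  exists (maxn a b).+1; apply/asboolP; split => //.
  apply: Ad_stop_large => //; apply: le_trans (ltW (truncnS_gt _)) _;
    by rewrite ler_nat ltnS ?leq_maxl ?leq_maxr.
case: ex_minnP => m /asboolP[m1 m_stop] m_min; split => [|k k1 k_stop]; last first.
  by apply: m_min; apply/asboolP.
split => // k /andP[k1 km] k_stop.
by have := m_min k (asboolT (conj k1 k_stop)); rewrite leqNgt km.
Qed.

Lemma Ad_m_le r nn k : (f r <= f z0)%E -> 4 * nb <= k%:R -> nn <= k%:R ->
  (Ad_m r nn <= k)%N.
Proof.
move=> rz0 k_nb k_nn; apply: (Ad_m_spec nn rz0).2; last exact: Ad_stop_large.
by rewrite -(ler_nat R); apply: le_trans k_nb; have := nb_ge_half; lra.
Qed.

Lemma n_coef_ext (Z Z' : nat -> vec) (M M' : nat -> nat) j :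
  (forall i, (i <= j)%N -> Z i = Z' i /\ M i = M' i) ->
  n_coef f Z M j = n_coef f Z' M' j.
Proof.
move=> eqZM; have eqZ i (ij : (i <= j)%N) := (eqZM i ij).1.
rewrite /n_coef /s_coef /m_prev (eqZM j (leqnn j)).2 (eqZ j (leqnn j)).
rewrite (eqZ j.-1 (leq_pred j)) (eqZ j.-2 (leq_trans (leq_pred _) (leq_pred j))).
by case: j eqZM {eqZ} => [|j] eqZM //; rewrite (eqZM j (leqnSn j)).2.
Qed.

(* Stage j of the run fixes z_0, ..., z_j and m_0, ..., m_j;
   the later entries are placeholders. *)
Definition Astar_step j (ZM : (nat -> vec) * (nat -> nat)) :=
  let m := Ad_m (ZM.1 j) (n_coef f ZM.1 ZM.2 j) in
  (fun i => if i == j.+1 then X (ZM.1 j) m else ZM.1 i,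
   fun i => if i == j.+1 then m else ZM.2 i).

Fixpoint Astar_stage j : (nat -> vec) * (nat -> nat) :=
  if j is j'.+1 then Astar_step j' (Astar_stage j') else (fun=> z0, fun=> 1%N).

Definition zs j := (Astar_stage j).1 j.
Definition ms j := (Astar_stage j).2 j.

Lemma Astar_stage_prefix j i : (i <= j)%N ->
  (Astar_stage j).1 i = zs i /\ (Astar_stage j).2 i = ms i.
Proof.
elim: j => [|j IH]; first by rewrite leqn0 => /eqP ->.
rewrite leq_eqVlt => /orP[/eqP -> // | ij].
by rewrite /= /Astar_step /= (ltn_eqF ij); apply: IH.
Qed.

Lemma ms_succ j : ms j.+1 = Ad_m (zs j) (n_coef f zs ms j).
Proof.
rewrite {1}/ms /= /Astar_step /= eqxx (Astar_stage_prefix (leqnn j)).1.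
by rewrite (n_coef_ext (fun i ij => Astar_stage_prefix ij)).
Qed.

Lemma zs_succ j : zs j.+1 = X (zs j) (ms j.+1).
Proof.
rewrite ms_succ {1}/zs /= /Astar_step /= eqxx (Astar_stage_prefix (leqnn j)).1.
by rewrite (n_coef_ext (fun i ij => Astar_stage_prefix ij)).
Qed.

Lemma zs_sublevel j : (f (zs j) <= f z0)%E.
Proof. by elim: j => [//|j IH]; rewrite zs_succ Ad_x_sublevel. Qed.

Lemma zs_run j : Ad_run f A (zs j) (n_coef f zs ms j) (zs j.+1) (ms j.+1).
Proof. by rewrite zs_succ ms_succ; exact: (Ad_m_spec _ (zs_sublevel j)).1. Qed.

Lemma ms_gt0 j : (0 < ms j)%N.
Proof. by case: j => [//|j]; have [] := zs_run j. Qed.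

Lemma n_coef_le_ms j : n_coef f zs ms j <= (ms j.+1)%:R.
Proof. by have [_ []] := zs_run j. Qed.

Lemma ms_homo : {homo ms : i k / (i <= k)%N}.
Proof.
apply: homo_leq leqnn leq_trans _ => j.
by rewrite -(ler_nat R); apply: le_trans (n_coef_le_ms j); rewrite le_max lexx.
Qed.

Lemma F_zs_succ_le j : F (zs j.+1) <= F (zs j).
Proof.
have := Ad_x_antimono (zs j) (leq0n (ms j.+1)); rewrite -zs_succ.
by rewrite (sublevel_finE (zs_sublevel _)) (sublevel_finE (zs_sublevel _)) lee_fin.
Qed.

Lemma fstar_le_zs j : fstar <= F (zs j).
Proof. exact: fstar_le_sublevel (zs_sublevel j). Qed.

Lemma s_coef_bound j : 4 * s_coef f zs j * (m_prev ms j)%:R <= 4 * nb.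
Proof.
have nb0 := nb_gt0.
case: j => [|[|j]]; rewrite /s_coef /= ?mul0r ?mulr0; try lra.
set m := ms j.+1; have m0 : 0 <= m%:R :> R := ler0n _ _.
have decay := Ad_x_rate (zs_sublevel j) (ms_gt0 j.+1); rewrite -zs_succ in decay.
have dec1 := F_zs_succ_le j; have dec2 := F_zs_succ_le j.+1.
have low := fstar_le_zs j.+2.
have := @shifted_ratio_le R (F (zs j.+1) - fstar) (F (zs j) - fstar)
  (F (zs j.+2) - fstar) _ _ ltac:(lra) ltac:(lra) (sqr_ge0 _) (sqr_ge0 _) decay.
rewrite !opprB !addrA !subrK; set Q := (_ / _) => ratio.
have : (m%:R + 1) * Num.sqrt Q <= nb.
  rewrite -(ger0_norm (addr_ge0 m0 ler01)) -(ger0_norm (ltW nb0)) -!sqrtr_sqr.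
  by rewrite -sqrtrM ?sqr_ge0 // ler_sqrt ?sqr_ge0.
have := sqrtr_ge0 Q; nra.
Qed.

Lemma msR_gt0 j : 0 < (ms j)%:R :> R.
Proof. by rewrite ltr0n ms_gt0. Qed.

Lemma ms_le K : 4 * nb <= K%:R -> forall j, (ms j <= K)%N.
Proof.
move=> K_nb; elim => [|j IH].
  by rewrite -(ler_nat R) /ms /=; apply: le_trans K_nb; have := nb_ge_half; lra.
rewrite ms_succ; apply: (Ad_m_le (zs_sublevel j) K_nb).
by rewrite /n_coef ge_max ler_nat IH /=; apply: le_trans (s_coef_bound j) K_nb.
Qed.

Variable eps : R.
Hypothesis eps_gt0 : 0 < eps.

Definition decr j := F (zs j) - F (zs j.+1).

Definition potential i := decr i / ((ms i.+2)%:R * (ms i.+1)%:R) ^+ 4.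

Lemma decr_ge0 j : 0 <= decr j.
Proof. by rewrite /decr subr_ge0 F_zs_succ_le. Qed.

Lemma decr_le j : decr j <= F z0 - fstar.
Proof.
rewrite /decr lerB // ?fstar_le_zs //.
by have := zs_sublevel j; rewrite (sublevel_finE (zs_sublevel j)) (sublevel_finE (lexx _)).
Qed.

Lemma Astar_stops : exists j, decr j <= eps.
Proof.
apply: contrapT => none.
have large j : eps < decr j by rewrite ltNge; apply/negP => small; apply: none; exists j.
have cumulative k : k%:R * eps <= F z0 - F (zs k).
  elim: k => [|k IH]; first by rewrite mul0r /zs /= subrr.
  by have := large k; rewrite /decr -natr1 mulrDl mul1r; lra.
set k := (Num.truncn ((F z0 - fstar) / eps)).+1.
have := truncnS_gt ((F z0 - fstar) / eps); rewrite ltr_pdivrMr // -/k.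
by have := cumulative k; have := fstar_le_zs k; lra.
Qed.

Lemma potential_step i : 0 < decr i ->
  (ms i.+3)%:R ^+ 2 <= 15 * (ms i.+1)%:R ^+ 2 :> R -> 15 * potential i.+1 <= potential i.
Proof.
move=> decr_gt0 slow.
have restart : 4 * Num.sqrt (decr i.+1 / (decr i + decr i.+1)) * (ms i.+1)%:R
    <= (ms i.+3)%:R.
  apply: le_trans (n_coef_le_ms i.+2); rewrite /n_coef le_max; apply/orP; right.
  by rewrite /decr addrA subrK.
have m13 : (ms i.+1)%:R <= (ms i.+3)%:R :> R by rewrite ler_nat; apply: ms_homo; lia.
have step := quartic_decrease_step decr_gt0 (decr_ge0 i.+1) (msR_gt0 i.+1) m13 slow restart.
rewrite /potential; set a := (ms i.+3)%:R; set b := (ms i.+2)%:R; set c := (ms i.+1)%:R.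
have [a0 b0 c0] : [/\ 0 < a, 0 < b & 0 < c] by split; exact: msR_gt0.
rewrite mulrA ler_pdivrMr ?exprn_gt0 ?mulr_gt0 // mulrAC.
rewrite ler_pdivlMr ?exprn_gt0 ?mulr_gt0 // !exprMn.
have := ler_wpM2l (exprn_ge0 4 (ltW b0)) step; lra.
Qed.

Lemma potential_window i l :
  (forall t, (t < l)%N -> 0 < decr (i + t) /\
     (ms (i + t).+3)%:R ^+ 2 <= 15 * (ms (i + t).+1)%:R ^+ 2 :> R) ->
  15 ^+ l * potential (i + l) <= potential i.
Proof.
elim: l => [|l IH] slow; first by rewrite expr0 mul1r addn0.
have [decr_gt0 slow_l] := slow l (ltnSn l).
apply: le_trans (IH (fun t tl => slow t (ltnW tl))).
rewrite exprSr -mulrA addnS ler_wpM2l ?exprn_ge0 //.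
exact: potential_step.
Qed.

Lemma potential_ge0 i : 0 <= potential i.
Proof. by rewrite divr_ge0 ?decr_ge0 ?exprn_ge0 ?ler0n. Qed.

Lemma potential_le_start i : potential i * (ms i.+1)%:R ^+ 8 <= F z0 - fstar.
Proof.
apply: le_trans (decr_le i); rewrite /potential -mulrA ler_piMr ?decr_ge0 //.
have [b0 c0] := (msR_gt0 i.+2, msR_gt0 i.+1).
rewrite ler_pdivrMl ?exprn_gt0 ?mulr_gt0 // mulr1 (exprM _ 2 4) ler_pXn2r ?nnegrE;
  do ?by rewrite ?mulr_ge0 ?exprn_ge0 // ltW.
by rewrite expr2 ler_pM2r // ler_nat; apply: ms_homo.
Qed.

Lemma eps_le_potential_end j : eps < decr j -> eps <= potential j * (ms j.+2)%:R ^+ 8.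
Proof.
move=> large; apply: le_trans (ltW large) _; rewrite /potential -mulrA ler_peMr ?decr_ge0 //.
have [b0 c0] := (msR_gt0 j.+2, msR_gt0 j.+1).
rewrite ler_pdivlMl ?exprn_gt0 ?mulr_gt0 // mulr1 (exprM _ 2 4) ler_pXn2r ?nnegrE;
  do ?by rewrite ?mulr_ge0 ?exprn_ge0 // ltW.
by rewrite expr2 ler_pM2l // ler_nat; apply: ms_homo.
Qed.

Lemma ms_growth J T : (2 <= T)%N -> (forall j, (j < J)%N -> eps < decr j) ->
  15 ^+ 4 * (eps + (F z0 - fstar)) <= 15 ^+ T.-1 * eps ->
  forall i, (i + T <= J)%N -> 15 * (ms i.+1)%:R ^+ 2 <= (ms (i.+1 + T))%:R ^+ 2 :> R.
Proof.
(* Otherwise the potential drops by 15^(T-1) across the window, although it starts below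
   (f(z0) - f* ) / x^8 and ends above eps / y^8 with y^8 < 15^4 x^8. *)
move=> T2 large horizon i iTJ; rewrite leNgt; apply/negP => fast.
have sq_homo a b : (a <= b)%N -> (ms a)%:R ^+ 2 <= (ms b)%:R ^+ 2 :> R.
  by move=> ab; rewrite ler_pXn2r ?nnegrE ?ler0n // ler_nat; apply: ms_homo.
have slow t : (t < T.-1)%N -> 0 < decr (i + t) /\
    (ms (i + t).+3)%:R ^+ 2 <= 15 * (ms (i + t).+1)%:R ^+ 2 :> R.
  move=> tT; split; first by apply: lt_trans eps_gt0 (large _ _); lia.
  apply: le_trans (sq_homo _ (i.+1 + T) _) _; first lia.
  by apply: le_trans (ltW fast) _; rewrite ler_pM2l //; apply: sq_homo; lia.
have window := potential_window slow.
have finish := eps_le_potential_end (large (i + T.-1)%N ltac:(lia)).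
have last_index : ((i + T.-1).+2 = i.+1 + T)%N by lia.
rewrite last_index in finish.
set x := (ms i.+1)%:R in fast *; set y := (ms (i.+1 + T))%:R in fast finish *.
have y8 : y ^+ 8 <= 15 ^+ 4 * x ^+ 8.
  rewrite !(exprM _ 2 4) -exprMn ler_pXn2r ?nnegrE ?exprn_ge0 ?mulr_ge0 ?ler0n //.
  exact: ltW.
have c1 := ler_wpM2l (exprn_ge0 T.-1 (ler0n R 15)) finish.
have c2 := ler_wpM2r (exprn_ge0 8 (ler0n R (ms (i.+1 + T)))) window.
have c3 := ler_wpM2l (potential_ge0 i) y8.
have c4 := ler_wpM2l (exprn_ge0 4 (ler0n R 15)) (potential_le_start i).
have := mulr_gt0 (exprn_gt0 4 (ltr0n R 15)) eps_gt0.
rewrite -/x in c4; lra.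
Qed.

Lemma Astar_complexity K T : 4 * nb <= K%:R -> (2 <= T)%N ->
  15 ^+ 4 * (eps + (F z0 - fstar)) <= 15 ^+ T.-1 * eps ->
  exists jout (Z : nat -> vec) (M : nat -> nat),
    [/\ Astar_run f A eps z0 jout Z M, forall j, (M j <= K)%N &
      (57 * \sum_(0 <= j < jout.+1) M j.+1 <= 77 * T * K)%N].
Proof.
move=> K_nb T2 horizon.
have [J stop_J J_min] := ex_minnP Astar_stops.
have large j : (j < J)%N -> eps < decr j.
  by move=> jJ; rewrite ltNge; apply: contraTN jJ => /J_min; rewrite -leqNgt.
have stopE j : (f (zs j) - f (zs j.+1) <= eps%:E)%E = (decr j <= eps).
  by rewrite (sublevel_finE (zs_sublevel j)) (sublevel_finE (zs_sublevel j.+1)).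
exists J, zs, ms; split; [split => // | exact: ms_le |].
- by move=> j _; exact: zs_run.
- by move=> j /large; rewrite stopE ltNge => /negP.
- by rewrite stopE.
(* 77^2 < 15 * 20^2 *)
have growth i : (0 < i)%N -> (i + T <= J.+1)%N -> ((20 + 57) * ms i <= 20 * ms (i + T))%N.
  case: i => // i _ iTJ; have := ms_growth T2 large horizon (i := i) ltac:(lia).
  rewrite -(ler_nat R) !natrM; set x := (ms i.+1)%:R; set y := (ms _)%:R => sq.
  rewrite leNgt; apply/negP => lt.
  have : (20 * y) ^+ 2 < (77 * x) ^+ 2 by rewrite ltr_pXn2r ?nnegrE ?mulr_ge0 ?ler0n.
  by rewrite !exprMn; have := sqr_ge0 x; lra.
have -> : (\sum_(0 <= j < J.+1) ms j.+1 = \sum_(1 <= i < J.+2) ms i)%N by rewrite big_add1.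
apply: leq_trans (sum_block_growth _ ms_homo growth) _; first lia.
by rewrite leq_mul2l ms_le ?orbT.
Qed.

End AdaptiveRestart.

Lemma horizon_bound (R : realType) (D eps : R) : 0 <= D -> 0 < eps ->
  exists T : nat, [/\ (5 <= T)%N,
    T%:R = (Num.ceil (5 + ln (1 + D / eps) / ln 15))%:~R :> R &
    15 ^+ 4 * (eps + D) <= 15 ^+ T.-1 * eps].
Proof.
move=> D0 eps0.
have ratio1 : 1 <= 1 + D / eps by rewrite lerDl divr_ge0 // ltW.
set L := ln (1 + D / eps) / ln 15.
have L0 : 0 <= L.
  by apply: divr_ge0; [exact: ln_ge0 | apply/ltW/ln_gt0; lra].
have ceil4 : (4 < Num.ceil (5 + L))%R by rewrite ceil_gt_int; lra.
have := ceil_ge (5 + L).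
case: (Num.ceil (5 + L)) ceil4 => [T|//]; rewrite ltz_nat => T5 T_ge.
exists T; split => //.
have -> : (T.-1 = 4 + (T - 5))%N by lia.
rewrite exprD -mulrA ler_pM2l ?exprn_gt0 //.
have : 1 + D / eps <= 15 ^+ (T - 5).
  apply: le_expn_of_ln_div; [lra | lra |].
  by rewrite -/L natrB //; move: T_ge; rewrite pmulrn; lra.
by move=> /(ler_wpM2r (ltW eps0)); rewrite mulrDl mul1r divfK ?gt_eqF.
Qed.

Theorem theorem1 (R : realType) (n : nat)
  (N : 'rV[R]_n -> R) (f : 'rV[R]_n -> \bar R) (fstar : R)
  (xbar : 'rV[R]_n -> 'rV[R]_n) (A : 'rV[R]_n -> nat -> 'rV[R]_n)
  (mu : R -> R) (af Lf : R) (g : 'rV[R]_n -> 'rV[R]_n)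
  (rho eps : R) (z0 : 'rV[R]_n) :
  (* the norm *)
  is_norm N ->
  (* f proper closed convex, and min f = fstar is attained *)
  proper_fun f -> closed_fun f -> convex_fun f ->
  (exists x, f x = fstar%:E) -> (forall y, (fstar%:E <= f y)%E) ->
  (* xbar x is a nearest point of Omega_f = {f = f*} to x *)
  (forall x, f (xbar x) = fstar%:E /\
     forall z, f z = fstar%:E -> N (x - xbar x) <= N (x - z)) ->
  (* A(x0,0) = x0 *)
  (forall x0, A x0 0%N = x0) ->
  (* Assumption (A)(i) *)
  (forall r, 0 < r -> 0 < mu r /\
     forall x0, (f x0 - fstar%:E <= r%:E)%E ->
       ((mu r / 2 * N (x0 - xbar x0) ^+ 2)%:E <= f x0 - fstar%:E)%E) ->
  (* Assumption (A)(ii) *)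
  0 < af -> 0 < Lf ->
  (forall x, g x = 0 <-> f x = fstar%:E) ->
  (forall x0, x0 \in dom f ->
     (f (A x0 1%N) <= f x0 - ((2 * Lf)^-1 * dual_norm N (g x0) ^+ 2)%:E)%E /\
     (forall k, (1 <= k)%N ->
        (f (A x0 k) - fstar%:E
           <= (af / (k%:R + 1) ^+ 2 * N (x0 - xbar x0) ^+ 2)%:E)%E)) ->
  (* data of the theorem *)
  0 < rho -> (f z0 - fstar%:E <= rho%:E)%E -> 0 < eps ->
  (* Assumption (A)(iii): nbar_rho *)
  let nbar := Num.max (2^-1) (Num.sqrt (2 * af / mu rho)) in
  let c := ((Num.ceil (4 * nbar))%:~R : R) in
  (* (i) A_* terminates (finite j_out) *)
  exists (jout : nat) (zs : nat -> 'rV[R]_n) (ms : nat -> nat),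
    Astar_run f A eps z0 jout zs ms /\
    (* (ii) m_{j+1} <= ceil(4 nbar) for j = 0..j_out *)
    (forall j, (j <= jout)%N -> (ms j.+1)%:R <= c) /\
    (* (iii) total number of iterations of A *)
    (\sum_(0 <= j < jout.+1) ms j.+1)%N%:R
      <= expR 1 * c / 2 *
         (Num.ceil (5 + ln (1 + (fr f z0 - fstar) / eps) / ln 15))%:~R.
Proof.
move=> _ _ _ _ _ fstar_min _ _ growth af0 _ _ decay rho0 z0rho eps0 nbar c.
have [mu0 qgrowth] := growth rho rho0.
have z0_fin : f z0 \is a fin_num by move: z0rho (fstar_min z0); case: (f z0).
have nbar_half : 2^-1 <= nbar by rewrite le_max lexx.
have nbar_sq : 2 * af / mu rho <= nbar ^+ 2.
  have ratio0 : 0 <= 2 * af / mu rho by rewrite divr_ge0 ?mulr_ge0 ?ltW.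
  by rewrite -(sqr_sqrtr ratio0) ler_pXn2r ?nnegrE ?le_max ?sqrtr_ge0 ?lexx ?orbT.
have rate := sublevel_restart_rate (d := fun x => N (x - xbar x)) fstar_min z0rho mu0
  (ltW af0) nbar_sq qgrowth (fun x k fx k1 => (decay x (mem_set fx)).2 k k1).
have [K cK K_nbar] : exists2 K : nat, c = K%:R & 4 * nbar <= K%:R.
  have ceil0 : (0 <= Num.ceil (4 * nbar))%R by rewrite ceil_ge0; lra.
  exists `|Num.ceil (4 * nbar)|%N; first by rewrite natr_absz ger0_norm.
  by rewrite natr_absz ger0_norm // ceil_ge.
have D0 : 0 <= fr f z0 - fstar by rewrite subr_ge0 -lee_fin /fr fineK.
have [T [T5 TE horizon]] := horizon_bound D0 eps0.
have [jout [zs [ms [run ms_K sum_ms]]]] :=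
  Astar_complexity fstar_min z0_fin rate nbar_half eps0 K_nbar (leq_trans (isT : (2 <= 5)%N) T5) horizon.
exists jout, zs, ms; split => //; split => [j _|]; first by rewrite cK ler_nat.
move: sum_ms; rewrite -TE cK -(ler_nat R) !natrM => sum_ms.
(* 77/57 <= (65/24)/2 <= e/2 *)
have KT0 := mulr_ge0 (ler0n R K) (ler0n R T).
have := ler_wpM2r KT0 (expR1_ge R); lra.
Qed.
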